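(* Let $(1,f_0,\dots,f_{d-1})$ be the $f$-vector of a simplicial complex. Then $\mu_{i+1}\big((i+2)f_i\big)\le (i+1)f_{i-1}$ for all $1\le i\le d-1$.
   Context: For positive integers $m,i$ let $m=\binom{a_i}{i}+\binom{a_{i-1}}{i-1}+\cdots+\binom{a_j}{j}$ with $a_i>\cdots>a_j\ge j\ge1$ be its unique $i$-th binomial expansion, and $\mu_i(m)=\binom{a_i}{i-1}+\binom{a_{i-1}}{i-2}+\cdots+\binom{a_j}{j-1}$; set $\mu_i(0)=0$. The $f$-vector of a simplicial complex is $(f_{-1},f_0,\dots)$ with $f_i$ the number of faces of cardinality $i+1$, $f_{-1}=1$. *)

From mathcomp Require Import all_boot.
Set Implicit Arguments. Unset Strict Implicit. Unset Printing Implicit Defensive.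

Definition simplicial_complex (T : finType) (D : {set {set T}}) : Prop :=
  set0 \in D /\ forall s t : {set T}, s \in D -> t \subset s -> t \in D.

(* fnum D k = number of faces of cardinality k; so f_i = fnum D i.+1
   and f_{-1} = fnum D 0 = 1. *)
Definition fnum (T : finType) (D : {set {set T}}) (k : nat) : nat :=
  #|[set s in D | #|s| == k]|.

(* d = maximal cardinality of a face, so the f-vector is (f_{-1},...,f_{d-1}). *)
Definition cdim (T : finType) (D : {set {set T}}) : nat :=
  \max_(s in D) #|s|.

(* a = [:: a_i; a_{i-1}; ...; a_j] is an i-th binomial expansion of m:
   m = C(a_i,i) + ... + C(a_j,j), a_i > ... > a_j >= j >= 1. *)
Definition binom_exp (i m : nat) (a : seq nat) : Prop :=
  [/\ 0 < size a <= i,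
      sorted (fun x y => y < x) a,
      i - (size a).-1 <= last 0 a &
      m = \sum_(t < size a) 'C(nth 0 a t, i - t)].

Definition mu_spec (i m v : nat) : Prop :=
  (m = 0 /\ v = 0) \/
  (0 < m /\ exists a, binom_exp i m a /\ v = \sum_(t < size a) 'C(nth 0 a t, (i - t).-1)).

From mathcomp Require Import all_boot zify.
Set Implicit Arguments. Unset Strict Implicit. Unset Printing Implicit Defensive.

(* mu k m is the Kruskal-Katona bound: a family of m sets of size k has at least
   mu k m sets in its shadow. We prove it by the shifting argument: compressions
   towards a fixed vertex z do not increase the shadow, and for a shifted family the
   bound follows by induction from the faces avoiding z and the link of z.
   For the corollary, mark each (i+1)-face of D at one of its vertices or at none, and
   move the marked vertex to a disjoint copy of the vertex set. This gives (i+2) f_i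
   distinct sets of size i+1 whose shadow consists of marked i-faces of D relabelled
   the same way, of which there are at most (i+1) f_(i-1). *)

Fixpoint bintop_from (k m n : nat) : nat :=
  match n with
  | 0 => 0
  | n'.+1 => if 'C(n, k) <= m then n else bintop_from k m n'
  end.

(* The largest [a] with ['C(a, k) <= m] (for [k > 0]); the search may start at [m + k]
   because ['C((m + k).+1, k) > m]. *)
Definition bintop (k m : nat) : nat := bintop_from k m (m + k).

(* Greedy binomial expansion: mu_k(C(a,k) + r) = C(a,k-1) + mu_(k-1)(r) with a maximal;
   [mu_specE] below identifies it with the mu_i of the statement. *)
Fixpoint mu (k m : nat) : nat :=
  match k with
  | 0 => 0
  | k'.+1 => if m == 0 then 0
             else 'C(bintop k m, k') + mu k' (m - 'C(bintop k m, k))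
  end.

Lemma ltn_bin_addS k m : 0 < k -> m < 'C((m + k).+1, k).
Proof.
case: k => // k _; elim: k => [|k IHk]; first by rewrite bin1 addn1.
by rewrite binS; apply: leq_trans (leq_addl _ _); rewrite addnS.
Qed.

Section BinomialTop.
Variables (k : nat) (k_gt0 : 0 < k).

Lemma bintop_from_le m n : 'C(bintop_from k m n, k) <= m.
Proof. by elim: n => [|n IHn] /=; [rewrite bin_small | case: ifP]. Qed.

Lemma bintop_from_max m n a : a <= n -> 'C(a, k) <= m -> a <= bintop_from k m n.
Proof.
elim: n => [|n IHn] /=; first by rewrite leqn0 => /eqP->.
rewrite leq_eqVlt => /orP[/eqP-> -> // | a_le_n bin_le].
by case: ifP => _; [apply: leqW | apply: IHn].
Qed.

Lemma bintopP m : 'C(bintop k m, k) <= m < 'C((bintop k m).+1, k).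
Proof.
rewrite bintop_from_le ltnNge /=; apply/negP => top_bin.
have top_lt : (bintop k m).+1 <= m + k.
  rewrite leqNgt; apply/negP => /(leq_bin2l k) big_bin.
  by have := leq_trans big_bin top_bin; rewrite leqNgt ltn_bin_addS.
by have := bintop_from_max top_lt top_bin; rewrite ltnn.
Qed.

Lemma bintop_eq m a : 'C(a, k) <= m < 'C(a.+1, k) -> bintop k m = a.
Proof.
have below b c : 'C(b, k) <= m -> m < 'C(c.+1, k) -> b <= c.
  move=> Cb_le Cc_gt; rewrite leqNgt; apply/negP => /(leq_bin2l k) Cc_le.
  by have := leq_trans Cc_le Cb_le; rewrite leqNgt Cc_gt.
case/andP=> Ca_le Ca_gt; have /andP[Ct_le Ct_gt] := bintopP m.
by apply/eqP; rewrite eqn_leq (below _ _ Ct_le Ca_gt) (below _ _ Ca_le Ct_gt).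
Qed.

End BinomialTop.

Lemma mu0 k : mu k 0 = 0. Proof. by case: k. Qed.

Lemma mu_unfold k m : 0 < m ->
  mu k.+1 m = 'C(bintop k.+1 m, k) + mu k (m - 'C(bintop k.+1 m, k.+1)).
Proof. by case: m. Qed.

Lemma bintop_ge k m : 0 < m -> k.+1 <= bintop k.+1 m.
Proof.
move=> m_gt0; have /andP[_ m_lt] := bintopP (ltn0Sn k) m.
rewrite ltnNge; apply/negP; rewrite -ltnS => /(leq_bin2l k.+1); rewrite binn => top_le.
by have := leq_trans m_lt top_le; rewrite ltnS leqn0 => /eqP m0; rewrite m0 in m_gt0.
Qed.

Lemma mu_binD k b s : s < 'C(b, k) -> (k.+1 <= b) || (0 < s) ->
  mu k.+1 ('C(b, k.+1) + s) = 'C(b, k) + mu k s.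
Proof.
move=> s_lt b_s; rewrite mu_unfold; last first.
  by case/orP: b_s => [b_ge|s_gt0]; [rewrite ltn_addr ?bin_gt0 | rewrite ltn_addl].
suff -> : bintop k.+1 ('C(b, k.+1) + s) = b by rewrite addKn.
by apply: bintop_eq; rewrite // leq_addr binS ltn_add2l.
Qed.

Lemma mu_bin k b : k.+1 <= b -> mu k.+1 'C(b, k.+1) = 'C(b, k).
Proof.
move=> b_ge; have := @mu_binD k b 0; rewrite !addn0 mu0 addn0; apply.
  by rewrite bin_gt0 ltnW.
by rewrite b_ge.
Qed.

Lemma mu1 m : mu 1 m = (0 < m).
Proof. by case: m => //= m; rewrite bin0. Qed.

Lemma mu_gt0 k m : 0 < k -> 0 < m -> 0 < mu k m.
Proof.
case: k => // k _ m_gt0; rewrite mu_unfold // ltn_addr // bin_gt0.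
exact: ltnW (bintop_ge k m_gt0).
Qed.

Lemma leq_mu k : {homo mu k : m n / m <= n}.
Proof.
elim: k => [//|k IHk]; apply: (homo_leq leqnn leq_trans) => m.
have [->|m_gt0] := posnP m; first by rewrite mu0.
have /andP[Ca_le Ca_gt] := bintopP (ltn0Sn k) m.
have a_ge := bintop_ge k m_gt0.
move: (bintop k.+1 m) Ca_le Ca_gt a_ge => a Ca_le Ca_gt a_ge.
have [r m_eq] : exists r, m = 'C(a, k.+1) + r by exists (m - 'C(a, k.+1)); rewrite subnKC.
subst m; have r_lt : r < 'C(a, k) by move: Ca_gt; rewrite binS ltn_add2l.
rewrite mu_binD ?a_ge //.
have [m1_lt | m1_ge] := ltnP ('C(a, k.+1) + r).+1 'C(a.+1, k.+1).
  rewrite -addnS mu_binD ?orbT ?leq_add2l ?IHk //.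
  by move: m1_lt; rewrite binS -addnS ltn_add2l.
have -> : ('C(a, k.+1) + r).+1 = 'C(a.+1, k.+1) by apply/eqP; rewrite eqn_leq Ca_gt m1_ge.
rewrite mu_bin; last exact: ltnW.
case: k IHk r_lt a_ge {Ca_le Ca_gt m1_ge m_gt0} => [|k] IHk r_lt a_ge.
  by rewrite /= !bin0.
by rewrite binS leq_add2l -(mu_bin (ltnW a_ge)) IHk // ltnW.
Qed.

(* The arithmetic of the shifting step: x is the size of the link of a vertex and
   m - x the number of faces avoiding it. *)
Lemma mu_le_add k m x : 0 < x -> mu k.+1 (m - x) <= x -> mu k.+1 m <= x + mu k x.
Proof.
elim: k m x => [|k IHk] m x x_gt0 mu_le; first by rewrite mu1 addn0; case: (0 < m).
have [->|m_gt0] := posnP m; first by rewrite mu0.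
have /andP[Cb_le Cb_gt] := bintopP (ltn0Sn k.+1) m.
have top_ge := bintop_ge k.+1 m_gt0.
move: (bintop k.+2 m) Cb_le Cb_gt top_ge => [//|b] Cb_le Cb_gt; rewrite ltnS => b_ge.
have [r m_eq] : exists r, m = 'C(b.+1, k.+2) + r.
  by exists (m - 'C(b.+1, k.+2)); rewrite subnKC.
subst m; have r_lt : r < 'C(b.+1, k.+1) by move: Cb_gt; rewrite binS ltn_add2l.
rewrite mu_binD ?ltnS ?b_ge //.
have [x_ge | x_lt] := leqP 'C(b.+1, k.+1) x.
  by rewrite leq_add // leq_mu // ltnW // (leq_trans r_lt).
have mx_small : 'C(b.+1, k.+2) + r - x < 'C(b.+1, k.+2).
  rewrite ltnNge; apply/negP => /(leq_mu k.+2); rewrite mu_bin // => mu_ge.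
  by have := leq_trans mu_ge mu_le; rewrite leqNgt x_lt.
have [x_lt_Cb | x_ge_Cb] := ltnP x 'C(b, k.+1).
  have : 'C(b, k.+2) + 1 <= 'C(b.+1, k.+2) + r - x by rewrite binS; lia.
  have one_lt : 1 < 'C(b, k.+1) by lia.
  move=> /(leq_mu k.+2); rewrite mu_binD ?one_lt ?orbT //.
  by have := mu_gt0 (ltn0Sn k) (ltn0Sn 0); lia.
have [y x_eq] : exists y, x = 'C(b, k.+1) + y by exists (x - 'C(b, k.+1)); rewrite subnKC.
subst x; have y_lt : y < 'C(b, k) by move: x_lt; rewrite binS ltn_add2l.
rewrite mu_binD ?b_ge // binS -!addnA leq_add2l addnCA leq_add2l.
have mu_ry : mu k.+1 (r - y) <= y.
  have C_gt0 : 0 < 'C(b, k.+1) by rewrite bin_gt0.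
  have [ry_lt | ry_ge] := ltnP (r - y) 'C(b, k.+1); last by move: mx_small; rewrite binS; lia.
  have [-> | ry_gt0] := posnP (r - y); first by rewrite mu0.
  have mx_eq : 'C(b.+1, k.+2) + r - ('C(b, k.+1) + y) = 'C(b, k.+2) + (r - y).
    by rewrite binS; lia.
  by move: mu_le; rewrite mx_eq mu_binD ?ry_gt0 ?orbT // leq_add2l.
have [y0 | y_gt0] := posnP y; last exact: IHk.
by move: mu_ry; rewrite y0 subn0 leqn0 => /eqP->.
Qed.

(* [cascade id a i] and [cascade predn a i] are the two sums of [mu_spec]. *)
Definition cascade (g : nat -> nat) (a : seq nat) (k : nat) : nat :=
  \sum_(t < size a) 'C(nth 0 a t, g (k - t)).

Definition cascade_shape (k : nat) (a : seq nat) : Prop :=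
  [/\ 0 < size a <= k, sorted (fun x y => y < x) a & k - (size a).-1 <= last 0 a].

Lemma cascade_nil g k : cascade g [::] k = 0.
Proof. by rewrite /cascade big_ord0. Qed.

Lemma cascade_cons g h a k : cascade g (h :: a) k = 'C(h, g k) + cascade g a k.-1.
Proof.
rewrite /cascade big_ord_recl subn0; congr (_ + _); apply: eq_bigr => t _.
by rewrite /= /bump add1n subnS -subn1 subnAC subn1.
Qed.

Lemma cascade_shape_behead k h h' a : cascade_shape k [:: h, h' & a] ->
  [/\ cascade_shape k.-1 (h' :: a), h' < h & 1 < k].
Proof.
case: k => [|k]; first by case=> /andP[].
rewrite /cascade_shape /= => -[size_le /andP[h'_lt sorted_a] last_ge]; split => //.
by move: size_le; rewrite !ltnS; case: (k) => //; rewrite ltn0.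
Qed.

Lemma cascade_lt k a : cascade_shape k a ->
  cascade id a k < 'C((head 0 a).+1, k) /\ k <= head 0 a.
Proof.
elim: a k => [|h a IHa] k; first by case=> /andP[].
case: a IHa => [|h' a] IHa shape_ha.
  case: shape_ha => /andP[_ k_gt0] _ /=; rewrite subn0 => h_ge.
  rewrite cascade_cons cascade_nil addn0; split => //.
  case: k k_gt0 h_ge => // k _ h_ge; rewrite binS -addn1 leq_add2l bin_gt0.
  exact: ltnW.
have [shape_a h'_lt k_gt1] := cascade_shape_behead shape_ha.
have [/= casc_lt k_le] := IHa _ shape_a.
have k_le_h : k <= h by lia.
split => //; rewrite cascade_cons /=.
case: k k_le_h casc_lt k_le k_gt1 {shape_ha shape_a} => // k k_le_h casc_lt _ _.
by rewrite binS ltn_add2l; apply: leq_trans casc_lt _; apply: leq_bin2l.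
Qed.

Lemma cascade_mu k a : cascade_shape k a -> cascade predn a k = mu k (cascade id a k).
Proof.
elim: a k => [|h a IHa] k shape_ha; first by case: shape_ha => /andP[].
have [casc_lt k_le_h] : _ /\ k <= h := cascade_lt shape_ha.
case: k shape_ha casc_lt k_le_h => [|k] shape_ha casc_lt k_le_h.
  by case: shape_ha => /andP[_]; rewrite ltn0.
rewrite !cascade_cons.
case: a IHa shape_ha casc_lt k_le_h => [|h' a] IHa shape_ha casc_lt k_le_h.
  by rewrite !cascade_nil mu_binD ?mu0 ?addn0 ?bin_gt0 ?k_le_h // ltnW.
have [shape_a h'_lt _] := cascade_shape_behead shape_ha.
have [casc_a_lt _] := cascade_lt shape_a.
rewrite (IHa _ shape_a) mu_binD ?k_le_h //.
exact: leq_trans casc_a_lt (leq_bin2l _ h'_lt).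
Qed.

Lemma mu_specE i m v : mu_spec i m v -> v = mu i m.
Proof.
case=> [[-> ->] | [_ [a [[size_a sorted_a last_a ->] ->]]]]; first by rewrite mu0.
exact: (@cascade_mu i a).
Qed.

Section Shadow.
Variable T : finType.
Implicit Types (A : {set {set T}}) (S : {set T}) (x y : T).

Definition shadow A : {set {set T}} :=
  [set S : {set T} | [exists x : T, (x \notin S) && (x |: S \in A)]].

Lemma shadowP A S : reflect (exists2 x, x \notin S & x |: S \in A) (S \in shadow A).
Proof.
rewrite inE; apply: (iffP existsP) => [[x /andP[]] | [x xS xSA]]; first by exists x.
by exists x; rewrite xS.
Qed.

Lemma mem_shadow A S x : x \notin S -> x |: S \in A -> S \in shadow A.
Proof. by move=> xS xSA; apply/shadowP; exists x. Qed.

Definition avoid z A : {set {set T}} := [set S in A | z \notin S].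

Lemma setD1U1 S x y : x != y -> (x |: S) :\ y = x |: (S :\ y).
Proof.
by move=> xy; apply/setP => w; rewrite !inE; case: (eqVneq w x) => [->|_]; rewrite ?xy.
Qed.

Lemma swapK S x y : x \in S -> y \notin S -> x |: ((y |: (S :\ x)) :\ y) = S.
Proof. by move=> xS yS; rewrite setU1K ?setD1K // !inE negb_and yS orbT. Qed.

Lemma card_swap S x y : x \in S -> y \notin S -> #|y |: (S :\ x)| = #|S|.
Proof.
by move=> xS yS; rewrite cardsU1 [in RHS](cardsD1 x) xS !inE (negbTE yS) andbF.
Qed.

Section Compression.
Variables (z j : T).
Hypothesis j_neq_z : j != z.

Definition shift A S : {set T} :=
  if [&& j \in S, z \notin S & z |: (S :\ j) \notin A] then z |: (S :\ j) else S.

Definition compress A : {set {set T}} := [set shift A S | S in A].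

Definition compressed_mem A S : bool :=
  if (z \in S) && (j \notin S) then (S \in A) || (j |: (S :\ z) \in A)
  else if (j \in S) && (z \notin S) then (S \in A) && (z |: (S :\ j) \in A)
  else S \in A.

Lemma mem_compress A S : (S \in compress A) = compressed_mem A S.
Proof.
have z_neq_j : z != j by rewrite eq_sym.
have zSj S' : z \in z |: (S' :\ j) by rewrite setU11.
have jSj S' : j \notin z |: (S' :\ j) by rewrite !inE (negbTE j_neq_z) eqxx.
have jSz S' : j \in j |: (S' :\ z) by rewrite setU11.
have zSz S' : z \notin j |: (S' :\ z) by rewrite !inE (negbTE z_neq_j) eqxx.
rewrite /compressed_mem; apply/imsetP/idP => [[S' S'A ->] | ].
  rewrite /shift; case: (boolP [&& _, _ & _]) => [/and3P[jS' zS' swapA] | no_shift].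
    by rewrite zSj jSj /= swapK // S'A orbT.
  case: ifP => [_ | _]; first by rewrite S'A.
  case: ifP => [/andP[jS' zS'] | _ //].
  by move: no_shift; rewrite jS' zS' S'A /= => /negbNE.
case: ifP => [/andP[zS jS] /orP[SA | swapA] | _].
- by exists S => //; rewrite /shift (negbTE jS).
- have [SA | SA] := boolP (S \in A); first by exists S => //; rewrite /shift (negbTE jS).
  by exists (j |: (S :\ z)) => //; rewrite /shift jSz zSz swapK // SA.
case: ifP => [/andP[jS zS] /andP[SA swapA] | not_jz SA]; exists S => //.
  by rewrite /shift jS zS swapA.
by rewrite /shift; case: (j \in S) (z \in S) not_jz => [] [].
Qed.

Lemma shift_inj A : {in A &, injective (shift A)}.
Proof.
move=> S1 S2 S1A S2A; rewrite /shift.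
case: ifP => [/and3P[j1 z1 n1] | _]; case: ifP => [/and3P[j2 z2 n2] | _] //.
- by move=> e; rewrite -(swapK j1 z1) e swapK.
- by move=> e; move: n1; rewrite e S2A.
- by move=> e; move: n2; rewrite -e S1A.
Qed.

Lemma card_compress A : #|compress A| = #|A|.
Proof. exact: card_in_imset (@shift_inj A). Qed.

Lemma compress_uniform A k : {in A, forall S, #|S| = k} -> {in compress A, forall S, #|S| = k}.
Proof.
move=> A_unif S /imsetP[S' S'A ->]; rewrite /shift.
by case: ifP => [/and3P[jS' zS' _] | _]; rewrite ?card_swap // A_unif.
Qed.

Lemma card_avoid_compress A S : S \in A -> j \in S -> z \notin S -> z |: (S :\ j) \notin A ->
  #|avoid z (compress A)| < #|avoid z A|.
Proof.
move=> SA jS zS swapA; apply: proper_card; apply/properP; split.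
  apply/subsetP => S'; rewrite !inE mem_compress /compressed_mem => /andP[S'C zS'].
  rewrite zS' andbT; move: S'C; rewrite (negbTE zS') /=.
  by case: (j \in S') => //= /andP[].
exists S; first by rewrite !inE SA zS.
by rewrite inE mem_compress /compressed_mem (negbTE zS) /= jS /= (negbTE swapA) andbF.
Qed.

Lemma shadow_compress A : shadow (compress A) \subset compress (shadow A).
Proof.
have z_neq_j : z != j by rewrite eq_sym.
apply/subsetP => S /shadowP[x xS]; rewrite !mem_compress /compressed_mem.
have [xz | x_neq_z] := eqVneq x z.
  subst x; rewrite setU11 in_setU1 (negbTE j_neq_z) (negbTE xS) /=.
  have [jS | jS] := boolP (j \in S) => /= xSA.
    rewrite (mem_shadow xS xSA); apply: (@mem_shadow _ _ j).
      by rewrite in_setU1 in_setD1 eqxx (negbTE j_neq_z).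
    by rewrite setUCA setD1K.
  case/orP: xSA => xSA; first exact: mem_shadow xS xSA.
  by rewrite (setU1K xS) in xSA; apply: mem_shadow jS xSA.
have [xj | x_neq_j] := eqVneq x j.
  subst x; rewrite setU11 in_setU1 (negbTE z_neq_j) (negbTE xS) /=.
  case: (z \in S) => /= [xSA | /andP[xSA _]]; last exact: mem_shadow xS xSA.
  by rewrite (mem_shadow xS xSA).
rewrite !in_setU1 eq_sym (negbTE x_neq_z) eq_sym (negbTE x_neq_j) /=.
case: (boolP (z \in S)) => zS; case: (boolP (j \in S)) => jS //= xSA.
- exact: mem_shadow xS xSA.
- case/orP: xSA => xSA; first by rewrite (mem_shadow xS xSA).
  apply/orP; right; apply: (@mem_shadow _ _ x).
    by rewrite in_setU1 in_setD1 negb_or x_neq_j negb_and xS orbT.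
  by rewrite setUCA -setD1U1.
- case/andP: xSA => xSA swapA; rewrite (mem_shadow xS xSA) /=.
  apply: (@mem_shadow _ _ x).
    by rewrite in_setU1 in_setD1 negb_or x_neq_z negb_and xS orbT.
  by rewrite setUCA -setD1U1.
- exact: mem_shadow xS xSA.
Qed.

End Compression.
End Shadow.

Section Shifted.
Variables (T : finType) (z : T).
Implicit Types (A : {set {set T}}) (S : {set T}).

Definition link A : {set {set T}} := [set S : {set T} | (z \notin S) && (z |: S \in A)].

Definition shifted A : Prop :=
  forall S y, S \in A -> y \in S -> z \notin S -> z |: (S :\ y) \in A.

Lemma link_inj A : {in link A &, injective (fun S => z |: S)}.
Proof.
by move=> S1 S2; rewrite !inE => /andP[zS1 _] /andP[zS2 _] e; rewrite -(setU1K zS1) e setU1K.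
Qed.

Lemma card_avoid_link A : #|A| = #|avoid z A| + #|link A|.
Proof.
rewrite -(cardsID [set S : {set T} | z \in S] A) addnC; congr (_ + _).
  by apply: eq_card => S; rewrite !inE andbC.
rewrite -(card_in_imset (@link_inj A)); apply: eq_card => S; rewrite !inE.
apply/andP/imsetP => [[SA zS] | [S' S'A ->]].
  by exists (S :\ z); rewrite ?setD1K // !inE eqxx setD1K.
by move: S'A; rewrite inE => /andP[_ ->]; rewrite setU11.
Qed.

Lemma link_uniform A k : {in A, forall S, #|S| = k.+1} -> {in link A, forall S, #|S| = k}.
Proof.
by move=> A_unif S; rewrite inE => /andP[zS /A_unif]; rewrite cardsU1 zS add1n => -[].
Qed.

Lemma shadow_avoid_sub A : shifted A -> shadow (avoid z A) \subset link A.
Proof.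
move=> A_shifted; apply/subsetP => S /shadowP[y yS].
rewrite !inE negb_or => /andP[ySA /andP[z_neq_y zS]]; rewrite zS /=.
have := A_shifted _ y ySA (setU11 y S); rewrite !inE negb_or z_neq_y zS => /(_ isT).
by rewrite setU1K.
Qed.

Lemma card_link_shadow A : #|link A| + #|shadow (link A)| <= #|shadow A|.
Proof.
have zS_link S : S \in shadow (link A) -> z \notin S.
  by case/shadowP=> y _; rewrite inE in_setU1 negb_or => /andP[/andP[_ ->] _].
have inj : {in shadow (link A) &, injective (fun S => z |: S)}.
  by move=> S1 S2 /zS_link z1 /zS_link z2 e; rewrite -(setU1K z1) e setU1K.
rewrite addnC -(cardsID [set S : {set T} | z \in S] (shadow A)); apply: leq_add.
  rewrite -(card_in_imset inj); apply: subset_leq_card; apply/subsetP => _ /imsetP[S S_sh ->].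
  case/shadowP: S_sh => y yS; rewrite inE in_setU1 negb_or => /andP[/andP[z_neq_y _] ySA].
  rewrite in_setI inE setU11 andbT; apply: (@mem_shadow _ _ _ y); last by rewrite setUCA.
  by rewrite in_setU1 negb_or eq_sym z_neq_y.
apply: subset_leq_card; apply/subsetP => S; rewrite [S \in link A]inE => /andP[zS SA].
by rewrite in_setD inE zS /=; apply: mem_shadow zS SA.
Qed.

Lemma shifted_or_shiftable A : shifted A \/
  exists S y, [/\ S \in A, y \in S, z \notin S & z |: (S :\ y) \notin A].
Proof.
have [shA | ] :=
  boolP [forall S in A, forall y, [&& y \in S & z \notin S] ==> (z |: (S :\ y) \in A)].
  left=> S y SA yS zS; move/forall_inP/(_ S SA)/forallP/(_ y): shA.
  by rewrite yS zS => /implyP; apply.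
case/forall_inPn=> S SA /forallPn[y]; rewrite negb_imply => /andP[/andP[yS zS] swapA].
by right; exists S, y.
Qed.

Lemma link_gt0 A k : {in A, forall S, #|S| = k.+1} -> shifted A -> 0 < #|A| -> 0 < #|link A|.
Proof.
move=> A_unif A_shifted /card_gt0P[S SA]; apply/card_gt0P.
have [zS | zS] := boolP (z \in S).
  by exists (S :\ z); rewrite !inE eqxx setD1K.
have /card_gt0P[y yS] : 0 < #|S| by rewrite A_unif.
exists (S :\ y); rewrite !inE (negbTE zS) andbF /=.
exact: A_shifted.
Qed.

Lemma mu_shadow_shifted k A : {in A, forall S, #|S| = k.+1} -> shifted A ->
  mu k.+1 #|avoid z A| <= #|shadow (avoid z A)| -> mu k #|link A| <= #|shadow (link A)| ->
  mu k.+1 #|A| <= #|shadow A|.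
Proof.
move=> A_unif A_shifted mu_avoid mu_link.
have [-> | A_gt0] := posnP #|A|; first by rewrite mu0.
have link_pos := link_gt0 A_unif A_shifted A_gt0.
have mu_rest : mu k.+1 (#|A| - #|link A|) <= #|link A|.
  rewrite card_avoid_link addnK; apply: leq_trans mu_avoid _.
  exact: subset_leq_card (shadow_avoid_sub A_shifted).
apply: leq_trans (mu_le_add link_pos mu_rest) _.
by apply: leq_trans (card_link_shadow A); rewrite leq_add2l.
Qed.

Lemma kruskal_katona_pivot k A : {in A, forall S, #|S| = k} -> mu k #|A| <= #|shadow A|.
Proof.
elim: k A => [//|k IHk] A.
have [n] := ubnP #|A|; elim: n A => // n IHn A.
have [c] := ubnP #|avoid z A|; elim: c A => // c IHc A avoid_lt A_lt A_unif.
have [-> | A_gt0] := posnP #|A|; first by rewrite mu0.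
have [A_shifted | [S [y [SA yS zS swapA]]]] := shifted_or_shiftable A.
  apply: (mu_shadow_shifted A_unif A_shifted); last exact/IHk/link_uniform.
  apply: IHn; last by move=> S; rewrite inE => /andP[/A_unif].
  have := link_gt0 A_unif A_shifted A_gt0; move: A_lt; rewrite (card_avoid_link A); lia.
have y_neq_z : y != z by apply: contraNneq zS => <-.
rewrite -(card_compress z y A); apply: leq_trans (IHc _ _ _ _) _.
- exact: leq_trans (card_avoid_compress y_neq_z SA yS zS swapA) avoid_lt.
- by rewrite card_compress.
- exact: compress_uniform.
rewrite -(card_compress z y (shadow A)).
exact: subset_leq_card (shadow_compress y_neq_z A).
Qed.

End Shifted.

Theorem kruskal_katona (T : finType) k (A : {set {set T}}) :
  {in A, forall S : {set T}, #|S| = k} -> mu k #|A| <= #|shadow A|.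
Proof.
case: k => [//|k] A_unif.
have [-> | [S SA]] := set_0Vmem A; first by rewrite cards0 mu0.
have /card_gt0P[z _] : 0 < #|S| by rewrite A_unif.
exact: kruskal_katona_pivot z _ _ A_unif.
Qed.

Section Relabel.
Variable T : finType.
Implicit Types (A : {set {set T}}) (F : {set T}) (o : option T) (u w : T).

Definition faces A k : {set {set T}} := [set F in A | #|F| == k].

Definition marks F : {set option T} := [set o | oapp (mem F) true o].

Definition marked A : {set {set T} * option T} := [set p | (p.1 \in A) && (p.2 \in marks p.1)].

Definition side o u : T + T := if Some u == o then inr u else inl u.

Definition relabel F o : {set T + T} := [set side o u | u in F].

Lemma faces_uniform A k : {in faces A k, forall F, #|F| = k}.
Proof. by move=> F; rewrite inE => /andP[_ /eqP]. Qed.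

Lemma card_marks F : #|marks F| = #|F|.+1.
Proof.
have -> : marks F = None |: [set Some u | u in F].
  apply/setP => -[u|]; rewrite !inE //=.
  by apply/idP/imsetP => [uF | [w wF [->]]] //; exists u.
rewrite cardsU1 card_imset; last exact: Some_inj.
by rewrite (_ : None \notin _) //; apply/imsetP => -[].
Qed.

Lemma card_marked A k : {in A, forall F, #|F| = k} -> #|marked A| = #|A| * k.+1.
Proof.
move=> A_unif; rewrite -sum1_card.
rewrite (eq_bigl (fun p => (p.1 \in A) && (p.2 \in marks p.1))); last by move=> p; rewrite inE.
rewrite -(pair_big_dep (mem A) (fun F o => o \in marks F) (fun _ _ => 1)) /=.
rewrite -sum1_card big_distrl /=; apply: eq_bigr => F FA.
by rewrite mul1n sum1dep_card cardsE card_marks A_unif.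
Qed.

Lemma marks_setD1 F o u : o \in marks F -> Some u != o -> o \in marks (F :\ u).
Proof.
case: o => [v|]; rewrite !inE //= in_setD1 => vF vu.
by rewrite vF andbT; apply: contra_neq vu => ->.
Qed.

Lemma side_inj o : injective (side o).
Proof. by move=> u w; rewrite /side; do 2 case: eqP => _; congruence. Qed.

Lemma card_relabel F o : #|relabel F o| = #|F|.
Proof. exact/card_imset/side_inj. Qed.

Lemma mem_relabel_inl F o u : (inl u \in relabel F o) = (u \in F) && (Some u != o).
Proof.
apply/imsetP/andP => [[w wF] | [uF uo]]; last by exists u; rewrite // /side (negbTE uo).
by rewrite /side; case: eqP => // wo [->]; split; last by apply/eqP.
Qed.

Lemma mem_relabel_inr F o u : (inr u \in relabel F o) = (u \in F) && (Some u == o).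
Proof.
apply/imsetP/andP => [[w wF] | [uF uo]]; last by exists u; rewrite // /side uo.
by rewrite /side; case: eqP => // /[swap] -[->] ->.
Qed.

Lemma relabel_inj A : {in marked A &, injective (fun p => relabel p.1 p.2)}.
Proof.
move=> [F o] [F' o']; rewrite !inE /= => /andP[_ oF] /andP[_ oF'] e.
have oo' : o = o'.
  case: o oF e => [v vF | _] e.
    move: (mem_relabel_inr F (Some v) v).
    by rewrite e !mem_relabel_inr (vF : v \in F) eqxx => /andP[_ /eqP].
  case: o' oF' e => [v vF' | //] e.
  move: (mem_relabel_inr F' (Some v) v).
  by rewrite -e mem_relabel_inr (vF' : v \in F') eqxx andbF.
subst o'; congr (_, _); apply/setP => u.
have memF F1 : (u \in F1) = (inl u \in relabel F1 o) || (inr u \in relabel F1 o).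
  by rewrite mem_relabel_inl mem_relabel_inr -andb_orr orNb andbT.
by rewrite memF e -memF.
Qed.

Lemma shadow_relabel_faces (D : {set {set T}}) k :
  (forall F G : {set T}, F \in D -> G \subset F -> G \in D) ->
  shadow [set relabel p.1 p.2 | p in marked (faces D k.+1)] \subset
    [set relabel p.1 p.2 | p in marked (faces D k)].
Proof.
move=> D_closed; apply/subsetP => R /shadowP[x xR /imsetP[[F o] /= Fo xR_eq]].
move: Fo; rewrite inE /= => /andP[/[dup] /faces_uniform cardF]; rewrite inE => /andP[FD _] oF.
have /imsetP[u uF xu] : x \in relabel F o by rewrite -xR_eq setU11.
set o' := if Some u == o then None else o.
apply/imsetP; exists (F :\ u, o'); rewrite /=.
  rewrite inE /=; apply/andP; split.
    rewrite inE (D_closed _ _ FD (subsetDl _ _)) /=.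
    by move: cardF; rewrite (cardsD1 u) uF add1n => -[->].
  by rewrite /o'; case: eqP => [_ | /eqP uo]; [rewrite inE | exact: marks_setD1].
have R_eq : R = relabel F o :\ x by rewrite -xR_eq setU1K.
have relF : relabel F o = x |: relabel (F :\ u) o by rewrite /relabel -{1}(setD1K uF) imsetU1 xu.
rewrite R_eq relF setU1K; last by rewrite xu (mem_imset _ _ (@side_inj o)) !inE eqxx.
apply: eq_in_imset => w; rewrite !inE => /andP[wu _]; rewrite /side /o'.
by case: (eqVneq (Some u) o) => [<- | //]; rewrite (inj_eq Some_inj) (negbTE wu).
Qed.

End Relabel.

Theorem corollary3p8 (T : finType) (D : {set {set T}}) :
  simplicial_complex D ->
  forall i : nat, 1 <= i -> i <= (cdim D).-1 ->
  forall v : nat, mu_spec i.+1 (i.+2 * fnum D i.+1) v ->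
  v <= i.+1 * fnum D i.
Proof.
(* The bound holds for every i. *)
move=> [_ D_closed] i _ _ v /mu_specE ->.
set B := [set relabel p.1 p.2 | p in marked (faces D i.+1)].
have card_B : #|B| = i.+2 * fnum D i.+1.
  by rewrite card_in_imset ?(card_marked (@faces_uniform _ D i.+1)) 1?mulnC //; exact: relabel_inj.
have B_unif : {in B, forall R : {set T + T}, #|R| = i.+1}.
  by move=> R /imsetP[[F o] + ->]; rewrite inE card_relabel => /andP[/faces_uniform].
rewrite -card_B; apply: leq_trans (kruskal_katona B_unif) _.
apply: leq_trans (subset_leq_card (shadow_relabel_faces i D_closed)) _.
by apply: leq_trans (leq_imset_card _ _) _; rewrite (card_marked (@faces_uniform _ D i)) mulnC.
Qed.
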